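(* Let $(M^*,p^* )$ be a non-compact model surface of revolution with metric $dt^2+m(t)^2d\theta^2$, where $m$ satisfies $m''(t)+K(t)m(t)=0$, $m(0)=0$, $m'(0)=1$. If $K(t)\le 0$ on $[0,\infty)$ and $\int_0^\infty t\,K(t)\,dt>-\infty$, then $M^*$ admits a finite total curvature.
   Context: A non-compact model surface of revolution is $\mathbb{R}^2$ with the metric $dt^2+m(t)^2d\theta^2$, where $(t,\theta)$ are polar coordinates about the origin and $m:(0,\infty)\to(0,\infty)$ is smooth, extends to a smooth odd function around $0$, and satisfies $m'(0)=1$; its Gauss curvature is $K=-m''/m$. The total curvature is $\int K_+\,dA+\int K_-\,dA$ ($K_+=\max\{K,0\}$, $K_-=\min\{K,0\}$, $dA=m(t)\,dt\,d\theta$ the area element), and it is finite if both integrals are finite. *)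

From Stdlib Require Import Reals.
Open Scope R_scope.

(* [D] is the tower of successive derivatives of [D 0]:
   D (S n) is the derivative of D n everywhere.  A function m is smooth
   iff such a tower with D 0 = m exists (and then D is unique). *)
Definition deriv_tower (D : nat -> R -> R) : Prop :=
  forall (n : nat) (x : R), derivable_pt_lim (D n) x (D (S n) x).

Definition gauss_curv (D : nat -> R -> R) (t : R) : R := - D 2%nat t / D 0%nat t.

Definition improper_integral_0_inf (f : R -> R) (l : R) : Prop :=
  exists H : (forall T : R, Riemann_integrable f 0 T),
    forall eps : R, eps > 0 ->
      exists A : R, forall T : R, T >= A -> Rabs (RiemannInt (H T) - l) < eps.

(* Total curvature int K_+ dA + int K_- dA is finite, where
   dA = m(t) dt dtheta on the model surface; integrating out theta gives
   int K_{+-} dA = 2*PI * int_0^infty K_{+-}(t) m(t) dt. *)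
Definition finite_total_curvature (D : nat -> R -> R) : Prop :=
  (exists lp : R, improper_integral_0_inf
     (fun t => 2 * PI * (Rmax (gauss_curv D t) 0 * D 0%nat t)) lp) /\
  (exists ln : R, improper_integral_0_inf
     (fun t => 2 * PI * (Rmin (gauss_curv D t) 0 * D 0%nat t)) ln).

(* On [0, oo) the metric function satisfies m'' = -K m >= 0, so m' is
   nondecreasing, m' >= m'(0) = 1 and m(t) <= t m'(t).  Hence
   (ln m')' = -K m / m' <= -t K, and integrating gives
   ln m'(T) <= -int_0^T t K <= -int_0^oo t K < oo.  Thus m' increases to a
   finite limit L, so that int_0^oo K m dt = -int_0^oo m'' dt = 1 - L is
   finite, while K_+ vanishes identically. *)

From Stdlib Require Import Reals Lra FunctionalExtensionality.
Open Scope R_scope.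

Lemma continuity_of_derivable_pt_lim (f f' : R -> R) :
  (forall x, derivable_pt_lim f x (f' x)) -> continuity f.
Proof.
  intros Hf x. apply derivable_continuous_pt. exists (f' x). apply Hf.
Qed.

Lemma RiemannInt_derivative (f f' : R -> R) :
  (forall x, derivable_pt_lim f x (f' x)) -> continuity f' ->
  forall a b (pr : Riemann_integrable f' a b), RiemannInt pr = f b - f a.
Proof.
  intros Hf Hf' a b pr.
  pose (df := fun x => exist (fun l => derivable_pt_lim f x l) (f' x) (Hf x)).
  exact (@FTC_Riemann {| c1 := f; diff0 := df; cont1 := Hf' |} a b pr).
Qed.

Lemma derivative_parity (f f' : R -> R) (s : R) :
  (forall x, derivable_pt_lim f x (f' x)) ->
  (forall t, f (- t) = s * f t) -> forall t, f' (- t) = - s * f' t.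
Proof.
  intros Hf Hs t.
  assert (Href : derivable_pt_lim (fun x => f (- x)) t (f' (- t) * -1)).
  { apply (derivable_pt_lim_comp (fun x => - x) f).
    - apply (derivable_pt_lim_opp id), derivable_pt_lim_id.
    - apply Hf. }
  assert (Hscal : derivable_pt_lim (fun x => f (- x)) t (s * f' t)).
  { replace (fun x => f (- x)) with (mult_real_fct s f)
      by (apply functional_extensionality; intro x; symmetry; apply Hs).
    apply derivable_pt_lim_scal, Hf. }
  assert (H := uniqueness_limite _ _ _ _ Href Hscal). lra.
Qed.

Lemma mean_value (f f' : R -> R) (a b : R) :
  (forall x, derivable_pt_lim f x (f' x)) -> a <= b ->
  exists c, a <= c <= b /\ f b - f a = f' c * (b - a).
Proof.
  intros Hf Hab. destruct (Req_dec a b) as [<- | Hne].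
  - exists a. split; [lra | ring].
  - destruct (MVT_cor2 f f' a b ltac:(lra) (fun c _ => Hf c)) as [c [Hc Hc']].
    exists c. split; [lra | exact Hc].
Qed.

Definition limit_at_pinfty (g : R -> R) (L : R) : Prop :=
  forall eps, eps > 0 -> exists A, forall T, T >= A -> Rabs (g T - L) < eps.

Lemma limit_at_pinfty_scal (g : R -> R) (L c : R) :
  limit_at_pinfty g L -> limit_at_pinfty (fun t => c * g t) (c * L).
Proof.
  intros HL eps Heps. destruct (Req_dec c 0) as [-> | Hc].
  - exists 0. intros T _. rewrite !Rmult_0_l, Rminus_0_r, Rabs_R0. lra.
  - assert (Hc' : 0 < Rabs c) by (apply Rabs_pos_lt, Hc).
    destruct (HL (eps / Rabs c)) as [A HA].
    { apply Rdiv_lt_0_compat; lra. }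
    exists A. intros T HT.
    rewrite <- Rmult_minus_distr_l, Rabs_mult.
    specialize (HA T HT).
    apply Rmult_lt_compat_l with (r := Rabs c) in HA; [| exact Hc'].
    replace (Rabs c * (eps / Rabs c)) with eps in HA by (field; lra).
    exact HA.
Qed.

Lemma limit_at_pinfty_nondecreasing (g : R -> R) (B : R) :
  (forall a b, 0 <= a <= b -> g a <= g b) -> (forall t, 0 <= t -> g t <= B) ->
  exists L, limit_at_pinfty g L.
Proof.
  intros Hmono Hbound.
  set (values := fun y => exists t, 0 <= t /\ y = g t).
  destruct (completeness values) as [L [HLub HLleast]].
  - exists B. intros y [t [Ht ->]]. apply Hbound, Ht.
  - exists (g 0), 0. split; lra.
  - exists L. intros eps Heps.
    assert (Hnear : exists t0, 0 <= t0 /\ L - eps < g t0).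
    { apply Classical_Pred_Type.not_all_not_ex. intro Hfar.
      assert (L <= L - eps); [| lra].
      apply HLleast. intros y [t [Ht ->]].
      apply Rnot_lt_le. intro Hlt. apply (Hfar t). split; assumption. }
    destruct Hnear as [t0 [Ht0 Hgt0]].
    exists t0. intros T HT.
    assert (g t0 <= g T) by (apply Hmono; lra).
    assert (g T <= L) by (apply HLub; exists T; split; [lra | reflexivity]).
    rewrite Rabs_minus_sym, Rabs_pos_eq; lra.
Qed.

Lemma improper_integral_zero : improper_integral_0_inf (fun _ => 0) 0.
Proof.
  exists (fun T => RiemannInt_P14 0 T 0). intros eps Heps.
  exists 0. intros T _.
  replace (RiemannInt _) with (0 * (T - 0))
    by (symmetry; apply (RiemannInt_P15 (RiemannInt_P14 0 T 0))).
  rewrite Rmult_0_l, Rminus_0_r, Rabs_R0. exact Heps.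
Qed.

Lemma improper_integral_derivative (g g' : R -> R) (L : R) :
  (forall x, derivable_pt_lim g x (g' x)) -> continuity g' ->
  limit_at_pinfty g L -> improper_integral_0_inf g' (L - g 0).
Proof.
  intros Hg Hg' HL.
  assert (pr : forall T, Riemann_integrable g' 0 T).
  { intro T. destruct (Rle_dec 0 T).
    - apply continuity_implies_RiemannInt; auto.
    - apply RiemannInt_P1, continuity_implies_RiemannInt; auto; lra. }
  exists pr. intros eps Heps. destruct (HL eps Heps) as [A HA].
  exists A. intros T HT.
  rewrite (RiemannInt_derivative g g' Hg Hg').
  replace (g T - g 0 - (L - g 0)) with (g T - L) by ring.
  apply HA, HT.
Qed.

Lemma RiemannInt_nonpos (f : R -> R) (a b : R) (pr : Riemann_integrable f a b) :
  a <= b -> (forall x, a < x < b -> f x <= 0) -> RiemannInt pr <= 0.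
Proof.
  intros Hab Hf.
  rewrite <- (Rmult_0_l (b - a)), <- (RiemannInt_P15 (RiemannInt_P14 a b 0)).
  apply RiemannInt_P19; [exact Hab | exact Hf].
Qed.

Lemma improper_integral_le_partial (f : R -> R) (l : R) :
  improper_integral_0_inf f l -> (forall t, 0 <= t -> f t <= 0) ->
  forall T (pr : Riemann_integrable f 0 T), 0 <= T -> l <= RiemannInt pr.
Proof.
  intros [prf Hl] Hf T pr HT. apply Rnot_lt_le. intro Hlt.
  destruct (Hl (l - RiemannInt pr)) as [A HA]; [lra |].
  set (T' := Rmax A T).
  specialize (HA T' (Rle_ge _ _ (Rmax_l A T))).
  assert (HTT' : T <= T') by apply Rmax_r.
  assert (prT : Riemann_integrable f T T')
    by (apply RiemannInt_P24 with 0; [apply RiemannInt_P1, pr | apply prf]).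
  assert (Hsplit := RiemannInt_P26 pr prT (prf T')).
  assert (Htail : RiemannInt prT <= 0)
    by (apply RiemannInt_nonpos; [exact HTT' | intros x Hx; apply Hf; lra]).
  rewrite Rabs_minus_sym in HA. assert (Habs := Rle_abs (l - RiemannInt (prf T'))).
  lra.
Qed.

Section ModelSurface.

Variable D : nat -> R -> R.
Hypothesis D_tower : deriv_tower D.
Hypothesis m_odd : forall t, D 0%nat (- t) = - D 0%nat t.
Hypothesis m_pos : forall t, 0 < t -> 0 < D 0%nat t.
Hypothesis m'_0 : D 1%nat 0 = 1.
Hypothesis K_nonpos : forall t, 0 < t -> gauss_curv D t <= 0.

Lemma D_continuity (n : nat) : continuity (D n).
Proof. apply (continuity_of_derivable_pt_lim _ _ (D_tower n)). Qed.

Lemma m'_even (t : R) : D 1%nat (- t) = D 1%nat t.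
Proof.
  rewrite (derivative_parity (D 0%nat) (D 1%nat) (-1) (D_tower 0%nat)); [ring |].
  intro x. rewrite m_odd. ring.
Qed.

Lemma m''_odd (t : R) : D 2%nat (- t) = - D 2%nat t.
Proof.
  rewrite (derivative_parity (D 1%nat) (D 2%nat) 1 (D_tower 1%nat)); [ring |].
  intro x. rewrite m'_even. ring.
Qed.

Lemma m_0 : D 0%nat 0 = 0.
Proof. assert (H := m_odd 0). rewrite Ropp_0 in H. lra. Qed.

(* At t = 0 both sides vanish, K(0) being the junk value -0/0 = 0. *)
Lemma m''_eq (t : R) : D 2%nat t = - gauss_curv D t * D 0%nat t.
Proof.
  unfold gauss_curv. destruct (Req_dec (D 0%nat t) 0) as [Hm | Hm].
  - rewrite Hm, Rmult_0_r.
    destruct (Rtotal_order t 0) as [Ht | [-> | Ht]].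
    + assert (H := m_pos (- t)). rewrite m_odd in H. lra.
    + assert (H := m''_odd 0). rewrite Ropp_0 in H. lra.
    + assert (H := m_pos t Ht). lra.
  - field. exact Hm.
Qed.

Lemma gauss_curv_even (t : R) : gauss_curv D (- t) = gauss_curv D t.
Proof.
  unfold gauss_curv. rewrite m''_odd, m_odd.
  destruct (Req_dec (D 0%nat t) 0) as [-> | Hm].
  - rewrite Ropp_0. unfold Rdiv. rewrite Rinv_0. ring.
  - field. exact Hm.
Qed.

Lemma gauss_curv_nonpos (t : R) : gauss_curv D t <= 0.
Proof.
  destruct (Rtotal_order t 0) as [Ht | [-> | Ht]].
  - rewrite <- gauss_curv_even. apply K_nonpos. lra.
  - unfold gauss_curv. rewrite m_0. unfold Rdiv. rewrite Rinv_0. lra.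
  - apply K_nonpos, Ht.
Qed.

Lemma m''_nonneg (t : R) : 0 <= t -> 0 <= D 2%nat t.
Proof.
  intro Ht. rewrite m''_eq. apply Rmult_le_pos.
  - generalize (gauss_curv_nonpos t). lra.
  - destruct (Req_dec t 0) as [-> | Hne]; [rewrite m_0; lra |].
    apply Rlt_le, m_pos. lra.
Qed.

Lemma m'_nondecreasing (a b : R) : 0 <= a <= b -> D 1%nat a <= D 1%nat b.
Proof.
  intros Hab. destruct (mean_value _ _ a b (D_tower 1%nat) ltac:(lra)) as [c [Hc Hmv]].
  assert (0 <= D 2%nat c * (b - a)) by (apply Rmult_le_pos; [apply m''_nonneg |]; lra).
  lra.
Qed.

Lemma m'_pos (t : R) : 0 < D 1%nat t.
Proof.
  assert (Hge : forall x, 0 <= x -> 1 <= D 1%nat x).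
  { intros x Hx. rewrite <- m'_0. apply m'_nondecreasing. lra. }
  destruct (Rle_or_lt 0 t) as [Ht | Ht].
  - generalize (Hge t Ht). lra.
  - rewrite <- m'_even. generalize (Hge (- t) ltac:(lra)). lra.
Qed.

Lemma m_le (t : R) : 0 <= t -> D 0%nat t <= t * D 1%nat t.
Proof.
  intro Ht. destruct (mean_value _ _ 0 t (D_tower 0%nat) Ht) as [c [Hc Hmv]].
  rewrite m_0 in Hmv.
  assert (D 1%nat c <= D 1%nat t) by (apply m'_nondecreasing; lra).
  nra.
Qed.

Lemma log_m'_derivative_le (t : R) :
  0 <= t -> D 2%nat t / D 1%nat t <= - (t * gauss_curv D t).
Proof.
  intro Ht. rewrite m''_eq.
  assert (Hm' := m'_pos t). assert (HK := gauss_curv_nonpos t).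
  apply Rmult_le_reg_r with (D 1%nat t); [exact Hm' |].
  replace (- gauss_curv D t * D 0%nat t / D 1%nat t * D 1%nat t)
    with (- gauss_curv D t * D 0%nat t) by (field; lra).
  assert (H := m_le t Ht). nra.
Qed.

Lemma m'_le_exp (l : R) :
  improper_integral_0_inf (fun t => t * gauss_curv D t) l ->
  forall T, 0 <= T -> D 1%nat T <= exp (- l).
Proof.
  intros Hl T HT. pose proof Hl as [prI _].
  set (g := fun x => D 2%nat x / D 1%nat x).
  assert (Hg : forall x, derivable_pt_lim (comp ln (D 1%nat)) x (g x)).
  { intro x. unfold g, Rdiv. rewrite Rmult_comm.
    apply derivable_pt_lim_comp; [apply D_tower | apply derivable_pt_lim_ln, m'_pos]. }
  assert (Hg' : continuity g).
  { intro x. apply (continuity_pt_div (D 2%nat) (D 1%nat)); try apply D_continuity.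
    apply Rgt_not_eq, m'_pos. }
  assert (prg : Riemann_integrable g 0 T) by (apply continuity_implies_RiemannInt; auto).
  assert (Hlog := RiemannInt_derivative _ _ Hg Hg' 0 T prg).
  unfold comp in Hlog. rewrite m'_0, ln_1, Rminus_0_r in Hlog.
  assert (Hsum := RiemannInt_P12 prg (prI T) (RiemannInt_P10 1 prg (prI T)) HT).
  assert (Hnonpos : RiemannInt (RiemannInt_P10 1 prg (prI T)) <= 0).
  { apply RiemannInt_nonpos; [exact HT |]. intros x Hx.
    assert (H := log_m'_derivative_le x ltac:(lra)). unfold g. lra. }
  assert (Hpartial : l <= RiemannInt (prI T)).
  { apply (improper_integral_le_partial _ _ Hl); [| exact HT].
    intros t Ht. assert (H := gauss_curv_nonpos t). nra. }
  assert (Hln : ln (D 1%nat T) <= - l) by lra.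
  rewrite <- (exp_ln (D 1%nat T)) by apply m'_pos.
  destruct (Rle_lt_or_eq_dec _ _ Hln) as [Hlt | ->].
  - apply Rlt_le, exp_increasing, Hlt.
  - apply Rle_refl.
Qed.

End ModelSurface.

Theorem lemma4p1 (m : R -> R) (D : nat -> R -> R)
  (HD0 : D 0%nat = m)
  (Hsmooth : deriv_tower D)
  (Hodd : forall t : R, m (- t) = - m t)
  (Hpos : forall t : R, 0 < t -> 0 < m t)
  (Hd1 : D 1%nat 0 = 1)
  (HK : forall t : R, 0 < t -> gauss_curv D t <= 0)
  (Hint : exists l : R, improper_integral_0_inf (fun t => t * gauss_curv D t) l) :
  finite_total_curvature D.
Proof.
  subst m. destruct Hint as [l Hl].
  destruct (limit_at_pinfty_nondecreasing (D 1%nat) (exp (- l))) as [L HL];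
    [apply m'_nondecreasing; assumption | apply m'_le_exp; assumption |].
  split.
  - exists 0.
    replace (fun t => _) with (fun _ : R => 0); [apply improper_integral_zero |].
    apply functional_extensionality. intro t.
    rewrite Rmax_right by (apply gauss_curv_nonpos; assumption). ring.
  - exists (-(2 * PI) * L - -(2 * PI) * D 1%nat 0).
    replace (fun t => _) with (fun t => -(2 * PI) * D 2%nat t).
    + apply (improper_integral_derivative (fun t => -(2 * PI) * D 1%nat t)).
      * intro x. apply (derivable_pt_lim_scal (D 1%nat)), Hsmooth.
      * intro x. apply (continuity_pt_scal (D 2%nat)), D_continuity, Hsmooth.
      * apply limit_at_pinfty_scal, HL.
    + apply functional_extensionality. intro t.
      rewrite Rmin_left by (apply gauss_curv_nonpos; assumption).
      rewrite m''_eq by assumption. ring.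
Qed.
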